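(* Let $M < N$ be positive integers. Define $\gamma_{N,M} : (\mathbb{R}^N \setminus \{\mathbf{0}\})^M \to \mathbb{R}^{N\times M}$ as follows: for nonzero $v^{(1)}, \dots, v^{(M)} \in \mathbb{R}^N$ let $U = \begin{bmatrix} v^{(1)}/\|v^{(1)}\|_2 & \cdots & v^{(M)}/\|v^{(M)}\|_2 \end{bmatrix} \in \mathbb{R}^{N\times M}$, let $U_1 \in \mathbb{R}^{M\times M}$ be the submatrix formed by the first $M$ rows of $U$, let $S = \tfrac12 I + \mathrm{striu}(U^\top U)$, and set $$\gamma_{N,M}(v^{(1)}, \dots, v^{(M)}) = \begin{bmatrix} I_M \\ \mathbf{0} \end{bmatrix} - U S^{-1} U_1^\top \in \mathbb{R}^{N\times M},$$ where $\begin{bmatrix} I_M \\ \mathbf{0}\end{bmatrix}\in\mathbb{R}^{N\times M}$ consists of the $M\times M$ identity on top of an $(N-M)\times M$ zero block. Then $S$ is always invertible, $\gamma_{N,M}$ takes values in the Stiefel manifold $\mathrm{St}(N,M)$, and $\gamma_{N,M}$ is surjective onto $\mathrm{St}(N,M)$.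
   Context: $\mathrm{St}(N,M) = \{\Omega \in \mathbb{R}^{N\times M} : \Omega^\top \Omega = I_M\}$. For a square matrix $X$, $\mathrm{striu}(X)$ denotes the strictly upper-triangular part of $X$ (all diagonal and below-diagonal entries set to zero). *)

From HB Require Import structures.
From mathcomp Require Import all_boot all_order all_algebra.
From mathcomp Require Import reals.
Set Implicit Arguments. Unset Strict Implicit. Unset Printing Implicit Defensive.
Import Order.TTheory GRing.Theory Num.Theory.
Local Open Scope ring_scope.

Definition norm2 {R : realType} {n : nat} (v : 'cV[R]_n) : R :=
  Num.sqrt (\sum_(i < n) v i 0 ^+ 2).

Definition striu {R : realType} {m : nat} (X : 'M[R]_m) : 'M[R]_m :=
  \matrix_(i, j) (if (i < j)%N then X i j else 0).

Definition stiefel {R : realType} {n m : nat} (Om : 'M[R]_(n, m)) : Prop :=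
  Om^T *m Om = 1%:M.

(* The vectors v^(1),..,v^(M) are the columns of V; N = M + K. *)
Definition normcols {R : realType} {N M : nat} (V : 'M[R]_(N, M)) : 'M[R]_(N, M) :=
  \matrix_(i, j) (V i j / norm2 (col j V)).

Definition Smat {R : realType} {N M : nat} (U : 'M[R]_(N, M)) : 'M[R]_M :=
  (2^-1) *: 1%:M + striu (U^T *m U).

Definition gammaNM {R : realType} {M K : nat} (V : 'M[R]_(M + K, M)) : 'M[R]_(M + K, M) :=
  let U := normcols V in
  col_mx 1%:M 0 - U *m invmx (Smat U) *m (usubmx U)^T.

From HB Require Import structures.
From mathcomp Require Import all_boot all_order all_algebra.
From mathcomp Require Import reals.
From mathcomp Require Import ring.
Import Order.TTheory GRing.Theory Num.Theory.
Local Open Scope ring_scope.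
Set Implicit Arguments. Unset Strict Implicit.

(* The map gamma is the compact WY representation of a product of Householder
   reflections, restricted to its first M columns.  For U with unit columns put
   G = U^T U, S = 1/2 + striu G and Q(U) = 1 - U S^-1 U^T, so that
   gamma V = Q(normcols V) *m [1; 0].
   - S is upper triangular with diagonal 1/2, hence invertible, and, since G is
     symmetric with unit diagonal, S + S^T = G.  This identity alone gives
     Q(U)^T Q(U) = 1, so gamma V has orthonormal columns.
   - Peeling off the first column u of U gives the block form of S and the
     factorisation Q([u, V]) = H(u) Q(V), where H(u) = 1 - 2 u u^T is the
     Householder reflection along u.
   - Surjectivity is by induction on the number of columns: a Householder
     reflection maps the first column of an orthonormal frame to e1, which
     leaves a smaller orthonormal frame in the lower right block.  Unit columns
     are fixed by normcols, so the frame built this way is its own preimage. *)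

Section CompactWY.

Variable R : realType.

Definition unit_cols N m (U : 'M[R]_(N, m)) : Prop :=
  forall j, (U^T *m U) j j = 1.

Definition wyQ N m (U : 'M[R]_(N, m)) : 'M[R]_N :=
  1%:M - U *m invmx (Smat U) *m U^T.

Definition householder N (u : 'cV[R]_N) : 'M[R]_N :=
  1%:M - 2 *: (u *m u^T).

Lemma two_neq0 : (2 : R) != 0.
Proof. by rewrite pnatr_eq0. Qed.

Lemma invmx_right n (A B : 'M[R]_n) : A \in unitmx -> A *m B = 1%:M -> invmx A = B.
Proof. by move=> uA AB; rewrite -[invmx A]mulmx1 -AB mulKmx. Qed.

Lemma sqnorm_eq0 n (x : 'cV[R]_n) : \sum_i x i 0 ^+ 2 = 0 -> x = 0.
Proof.
move=> hs; apply/matrixP => i k; rewrite (ord1 k) !mxE.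
apply/eqP; rewrite -sqrf_eq0; apply/eqP.
by apply: (psumr_eq0P _ hs) => // l _; exact: sqr_ge0.
Qed.

(* S is upper triangular with diagonal entries 1/2, whatever U is. *)
Lemma Smat_unit N m (U : 'M[R]_(N, m)) : Smat U \in unitmx.
Proof.
rewrite unitmxE -det_tr det_trig.
  rewrite (eq_bigr (fun _ => 2^-1)).
    by rewrite prodr_const unitfE expf_neq0 // invr_eq0 two_neq0.
  by move=> i _; rewrite !mxE eqxx ltnn addr0 mulr1.
apply/forallP=> i; apply/forallP=> j; apply/implyP=> lij.
rewrite !mxE ltnNge (ltnW lij) /=.
by rewrite -val_eqE /= (gtn_eqF lij) mulr0 addr0.
Qed.

Lemma Smat_add_tr N m (U : 'M[R]_(N, m)) :
  unit_cols U -> Smat U + (Smat U)^T = U^T *m U.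
Proof.
move=> hU; apply/matrixP=> i j.
have gram_sym : (U^T *m U) j i = (U^T *m U) i j.
  by rewrite !mxE; apply: eq_bigr => k _; rewrite !mxE mulrC.
move: hU; rewrite /unit_cols /Smat; move: (U^T *m U) gram_sym => G gram_sym hU.
rewrite !mxE.
case: (ltngtP i j) => hij.
- by rewrite -!val_eqE /= (ltn_eqF hij) (gtn_eqF hij) !mulr0 !add0r addr0.
- by rewrite -!val_eqE /= (ltn_eqF hij) (gtn_eqF hij) !mulr0 !add0r gram_sym.
- have -> : i = j by apply: val_inj.
  rewrite eqxx !mulr1 !addr0 hU -mulr2n -[in LHS](mulr1 (2^-1)) -mulrnAr.
  by rewrite mulVf // two_neq0.
Qed.

(* Q(U) is orthogonal when U has unit columns: with T = S^-1,
   T^T G T = T^T (S + S^T) T = T^T + T cancels the cross terms. *)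
Lemma wyQ_orthogonal N m (U : 'M[R]_(N, m)) :
  unit_cols U -> (wyQ U)^T *m wyQ U = 1%:M.
Proof.
move=> hU; rewrite /wyQ; set T := invmx (Smat U).
have hST : Smat U *m T = 1%:M by rewrite mulmxV // Smat_unit.
have key : T^T *m (U^T *m U) *m T = T^T + T.
  rewrite -(Smat_add_tr hU) mulmxDr mulmxDl -mulmxA hST mulmx1.
  by rewrite -trmx_mul hST trmx1 mul1mx.
have -> : (1%:M - U *m T *m U^T)^T = 1%:M - U *m T^T *m U^T.
  by rewrite linearB /= trmx1 !trmx_mul trmxK mulmxA.
rewrite mulmxBl mul1mx mulmxBr mulmx1.
have -> : U *m T^T *m U^T *m (U *m T *m U^T) = U *m (T^T *m (U^T *m U) *m T) *m U^T.
  by rewrite !mulmxA.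
by rewrite key mulmxDr mulmxDl opprD opprK addKr subrK.
Qed.

Lemma gamma_wyQ M K (V : 'M[R]_(M + K, M)) :
  gammaNM V = wyQ (normcols V) *m col_mx 1%:M 0.
Proof.
rewrite /gammaNM /wyQ; set U := normcols V.
have -> : (usubmx U)^T = U^T *m col_mx 1%:M 0.
  by rewrite -{2}(vsubmxK U) tr_col_mx mul_row_col mulmx1 mulmx0 addr0.
by rewrite mulmxBl mul1mx !mulmxA.
Qed.

Lemma stiefel_orthogonal_cols M K (Q : 'M[R]_(M + K)) :
  Q^T *m Q = 1%:M -> stiefel (Q *m col_mx 1%:M (0 : 'M_(K, M))).
Proof.
move=> hQ; rewrite /stiefel trmx_mul -mulmxA (mulmxA Q^T) hQ mul1mx.
by rewrite tr_col_mx mul_row_col mulmx1 mulmx0 addr0 trmx1.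
Qed.

Lemma normcols_unit_cols N m (V : 'M[R]_(N, m)) :
  (forall j, col j V != 0) -> unit_cols (normcols V).
Proof.
move=> hV j; set s := \sum_i V i j ^+ 2.
have col_sq : \sum_i (col j V) i 0 ^+ 2 = s by apply: eq_bigr => i _; rewrite !mxE.
have s_ge0 : 0 <= s by apply: sumr_ge0 => i _; exact: sqr_ge0.
have s_neq0 : s != 0.
  by apply: contra (hV j) => /eqP hs; apply/eqP/sqnorm_eq0; rewrite col_sq.
have norm_sq : norm2 (col j V) ^+ 2 = s by rewrite /norm2 col_sq sqr_sqrtr.
rewrite mxE (eq_bigr (fun i => V i j ^+ 2 / norm2 (col j V) ^+ 2)).
  by rewrite -mulr_suml norm_sq mulfV.
by move=> i _; rewrite !mxE -expr2 expr_div_n.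
Qed.

Lemma normcols_id N m (U : 'M[R]_(N, m)) : unit_cols U -> normcols U = U.
Proof.
move=> hU; apply/matrixP => i j; rewrite mxE.
suff -> : norm2 (col j U) = 1 by rewrite divr1.
rewrite /norm2 -sqrtr1 -(hU j) mxE; congr Num.sqrt.
by apply: eq_bigr => k _; rewrite !mxE expr2.
Qed.

Lemma unit_cols_neq0 N m (U : 'M[R]_(N, m)) : unit_cols U -> forall j, col j U != 0.
Proof.
move=> hU j; apply/eqP => hj; move: (hU j); rewrite mxE big1 => [/eqP|k _].
  by rewrite eq_sym oner_eq0.
have := congr1 (fun A : 'M[R]_(N, 1) => A k 0) hj; rewrite !mxE => ->.
by rewrite mulr0.
Qed.

Lemma striu_block n1 n2 (A : 'M[R]_n1) B C (D : 'M[R]_n2) :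
  striu (block_mx A B C D) = block_mx (striu A) B 0 (striu D).
Proof.
apply/matrixP => i j; rewrite mxE.
case: (split_ordP i) => i' ->; case: (split_ordP j) => j' ->;
  rewrite ?block_mxEul ?block_mxEur ?block_mxEdl ?block_mxEdr ?mxE //=.
- by rewrite (leq_trans (ltn_ord i') (leq_addr _ _)).
- by rewrite ltnNge (leq_trans (ltnW (ltn_ord j')) (leq_addr _ _)).
- by rewrite ltn_add2l.
Qed.

Lemma Smat_row N m (u : 'cV[R]_N) (V : 'M[R]_(N, m)) :
  Smat (row_mx u V) = block_mx (2^-1)%:M (u^T *m V) 0 (Smat V).
Proof.
have striu1 (A : 'M[R]_1) : striu A = 0.
  by apply/matrixP => i j; rewrite !mxE (ord1 i) (ord1 j) ltnn.
rewrite /Smat tr_row_mx mul_col_row striu_block striu1 !scalemx1.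
by rewrite (scalar_mx_block 1 m) add_block_mx !addr0 !add0r.
Qed.

Lemma invmx_Smat_row N m (u : 'cV[R]_N) (V : 'M[R]_(N, m)) :
  invmx (Smat (row_mx u V)) =
  block_mx 2%:M (- (2 *: (u^T *m V *m invmx (Smat V)))) 0 (invmx (Smat V)).
Proof.
apply: invmx_right; first exact: Smat_unit.
rewrite Smat_row mulmx_block !mul_scalar_mx !mulmx0 !mul0mx !addr0 !add0r.
rewrite mulmxV ?Smat_unit // scalerN scalerA mulVf ?two_neq0 // scale1r addNr.
by rewrite scale_scalar_mx mulVf ?two_neq0 // -scalar_mx_block.
Qed.

Lemma wyQ_row N m (u : 'cV[R]_N) (V : 'M[R]_(N, m)) :
  wyQ (row_mx u V) = householder u *m wyQ V.
Proof.
rewrite /wyQ /householder invmx_Smat_row tr_row_mx mul_row_block mul_row_col.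
rewrite !mulmx0 !addr0 mul_mx_scalar !mulmxBl !mulmxBr !mul1mx !mulmx1.
rewrite !mulmxDl !mulmxN !mulNmx -!scalemxAl -!scalemxAr -!scalemxAl !mulmxA.
by rewrite !opprD !opprK !addrA addrAC (addrAC 1%:M).
Qed.

Lemma wyQ_col0 N m (U : 'M[R]_(N, m)) :
  wyQ (col_mx (0 : 'M_(1, m)) U) = block_mx 1%:M 0 0 (wyQ U).
Proof.
have S_col0 : Smat (col_mx (0 : 'M_(1, m)) U) = Smat U.
  by rewrite /Smat tr_col_mx mul_row_col mulmx0 add0r.
rewrite /wyQ S_col0 tr_col_mx mul_col_mx mul_col_row !mul0mx trmx0 !mulmx0.
by rewrite (scalar_mx_block 1 N) opp_block_mx add_block_mx !oppr0 !addr0.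
Qed.

Lemma householder_sym_invol N (u : 'cV[R]_N) :
  u^T *m u = 1%:M ->
  (householder u)^T = householder u /\ householder u *m householder u = 1%:M.
Proof.
move=> hu; rewrite /householder; split.
  by rewrite linearB /= trmx1 linearZ /= trmx_mul trmxK.
rewrite mulmxBl mul1mx mulmxBr mulmx1 -scalemxAl -scalemxAr.
rewrite mulmxA -(mulmxA u) hu mulmx1 scalerA -scalerBl -addrA -opprD -scalerDl.
have -> : (2 + (2 - 2 * 2) : R) = 0 by ring.
by rewrite scale0r subr0.
Qed.

(* For distinct unit vectors w and e, the reflection along w - e swaps them. *)
Lemma householder_sends n (w e : 'cV[R]_n) :
  w^T *m w = 1%:M -> e^T *m e = 1%:M -> w != e ->
  exists u : 'cV[R]_n, u^T *m u = 1%:M /\ householder u *m w = e.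
Proof.
move=> ww ee wne; pose d := w - e.
have ew_sym : w^T *m e = e^T *m w.
  have tr11 (A : 'M[R]_1) : A^T = A by rewrite [A]mx11_scalar tr_scalar_mx.
  by rewrite -[LHS]tr11 trmx_mul trmxK.
have dw : d^T *m w = 1%:M - e^T *m w by rewrite /d linearB /= mulmxBl ww.
have dd : d^T *m d = d^T *m w + d^T *m w.
  rewrite {2}/d mulmxBr dw /d linearB /= mulmxBl ew_sym ee.
  by rewrite opprB addrA.
set c := (d^T *m w) 0 0; set s := (d^T *m d) 0 0.
have s_c : s = c + c by rewrite /s dd mxE.
have s_gt0 : 0 < s.
  have -> : s = \sum_i d i 0 ^+ 2.
    by rewrite /s mxE; apply: eq_bigr => i _; rewrite !mxE expr2.
  rewrite lt_def sumr_ge0 ?andbT; last by move=> i _; exact: sqr_ge0.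
  by apply: contra wne => /eqP /sqnorm_eq0 /eqP; rewrite subr_eq0.
have c_neq0 : c != 0 by apply: contraTneq s_gt0 => c0; rewrite s_c c0 addr0 ltxx.
pose a := (Num.sqrt s)^-1.
have aa : a * a = s^-1 by rewrite /a -expr2 exprVn sqr_sqrtr // ltW.
have trZ : (a *: d)^T = a *: d^T by rewrite linearZ.
exists (a *: d); split.
  rewrite trZ -scalemxAl -scalemxAr scalerA aa [d^T *m d]mx11_scalar.
  by rewrite scale_scalar_mx mulVf // gt_eqF.
rewrite /householder mulmxBl mul1mx trZ -scalemxAr -!scalemxAl !scalerA.
rewrite -mulmxA [d^T *m w]mx11_scalar mul_mx_scalar !scalerA -/c.
have -> : 2 * a * a * c = 1.
  by rewrite -(mulrA 2 a a) aa s_c; field; rewrite -mulr2n mulrn_eq0 c_neq0.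
by rewrite scale1r /d opprB addrC subrK.
Qed.

Lemma householder_to_e1 N (hN : (0 < N)%N) (w : 'cV[R]_(1 + N)) :
  w^T *m w = 1%:M ->
  exists u : 'cV[R]_(1 + N), u^T *m u = 1%:M /\ householder u *m w = col_mx 1%:M 0.
Proof.
move=> ww; set e1 : 'cV[R]_(1 + N) := col_mx 1%:M 0.
have ee : e1^T *m e1 = 1%:M.
  by rewrite /e1 tr_col_mx mul_row_col mulmx0 addr0 trmx1 mulmx1.
have [-> | wne] := eqVneq w e1; last exact: householder_sends.
pose d : 'cV[R]_N := delta_mx (Ordinal hN) 0.
exists (col_mx 0 d); split.
  rewrite tr_col_mx mul_row_col mulmx0 add0r /d trmx_delta mul_delta_mx.
  by apply/matrixP => i j; rewrite (ord1 i) (ord1 j) !mxE.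
rewrite /householder mulmxBl mul1mx -scalemxAl -mulmxA /e1 tr_col_mx mul_row_col.
by rewrite trmx0 mul0mx mulmx0 add0r mulmx0 scaler0 subr0.
Qed.

Lemma stiefel_peel N m (hN : (0 < N)%N) (Om : 'M[R]_(1 + N, 1 + m)) :
  Om^T *m Om = 1%:M ->
  exists u : 'cV[R]_(1 + N), u^T *m u = 1%:M /\
  exists D : 'M[R]_(N, m), D^T *m D = 1%:M /\
    Om = householder u *m block_mx 1%:M 0 0 D.
Proof.
move=> hO.
have first_unit : (lsubmx Om)^T *m lsubmx Om = 1%:M.
  move: hO; rewrite -{1 2}(hsubmxK Om) tr_row_mx mul_col_row (scalar_mx_block 1 m).
  by case/eq_block_mx.
have [u [hu hH]] := householder_to_e1 hN first_unit.
exists u; split => //.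
have [Ht HH] := householder_sym_invol hu.
set A := householder u *m Om.
have hA : A^T *m A = 1%:M.
  by rewrite /A trmx_mul Ht mulmxA -(mulmxA Om^T) HH mulmx1.
have hl : lsubmx A = col_mx 1%:M 0 by rewrite /A -mulmx_lsub.
have ul : ulsubmx A = 1%:M.
  by rewrite -[RHS](col_mxKu _ (0 : 'M_(N, 1))) -hl; apply/matrixP=> i j; rewrite !mxE.
have dl : dlsubmx A = 0.
  by rewrite -[RHS](col_mxKd (1%:M : 'M_1)) -hl; apply/matrixP=> i j; rewrite !mxE.
move: hA; rewrite -(submxK A) ul dl tr_block_mx mulmx_block (scalar_mx_block 1 m).
case/eq_block_mx => _ + _ +.
rewrite trmx1 mul1mx trmx0 mul0mx addr0 => ur0.
rewrite ur0 trmx0 mul0mx add0r => hD.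
exists (drsubmx A); split => //.
by rewrite -ur0 -ul -dl submxK /A mulmxA HH mul1mx.
Qed.

Lemma unit_cols_row N m (u : 'cV[R]_(1 + N)) (U' : 'M[R]_(N, m)) :
  u^T *m u = 1%:M -> unit_cols U' -> unit_cols (row_mx u (col_mx 0 U')).
Proof.
move=> hu hU' j; rewrite tr_row_mx mul_col_row tr_col_mx mul_row_col.
rewrite trmx0 mul0mx add0r.
case: (split_ordP j) => j' ->; first by rewrite block_mxEul hu (ord1 j') mxE.
by rewrite block_mxEdr hU'.
Qed.

Lemma embedding_block m K :
  (col_mx (1%:M : 'M[R]_(1 + m)) (0 : 'M_(K, 1 + m)) : 'M_(1 + (m + K), 1 + m))
  = block_mx 1%:M 0 0 (col_mx 1%:M 0).
Proof.
have colE a b (i : 'I_(a + b)) (j : 'I_a) :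
    (col_mx (1%:M : 'M[R]_a) (0 : 'M_(b, a))) i j = ((i : nat) == j)%:R.
  case: (split_ordP i) => i' ->; rewrite ?col_mxEu ?col_mxEd !mxE //=.
  by rewrite gtn_eqF // (leq_trans (ltn_ord j) (leq_addr _ _)).
apply/matrixP => i j; rewrite (colE (1 + m)%N K i).
case: (split_ordP i) => i' ->; case: (split_ordP j) => j' ->;
  rewrite ?block_mxEul ?block_mxEur ?block_mxEdl ?block_mxEdr ?colE ?mxE /=.
- by rewrite (ord1 i') (ord1 j').
- by rewrite (ord1 i').
- by rewrite (ord1 j').
- by rewrite eqn_add2l.
Qed.

Lemma wyQ_peel m K (u : 'cV[R]_(1 + (m + K))) (U' : 'M[R]_(m + K, m)) :
  (wyQ (row_mx u (col_mx 0 U')) *m col_mx (1%:M : 'M_(1 + m)) (0 : 'M_(K, 1 + m))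
     : 'M_(1 + (m + K), 1 + m))
  = householder u *m block_mx 1%:M 0 0 (wyQ U' *m col_mx 1%:M 0).
Proof.
rewrite wyQ_row wyQ_col0 embedding_block -mulmxA mulmx_block.
by rewrite !mulmx1 !mulmx0 !mul0mx !addr0 !add0r.
Qed.

Lemma wyQ_surjective K (hK : (0 < K)%N) m (Om : 'M[R]_(m + K, m)) :
  Om^T *m Om = 1%:M ->
  exists U : 'M[R]_(m + K, m), unit_cols U /\ wyQ U *m col_mx 1%:M 0 = Om.
Proof.
elim: m Om => [|m IH] Om hO.
  by exists 0; split; [case | apply/matrixP => i []].
have hN : (0 < m + K)%N by rewrite addn_gt0 hK orbT.
have [u [hu [D [hD ->]]]] := stiefel_peel hN hO.
have [U' [hU' hQ]] := IH D hD.
exists (row_mx u (col_mx 0 U')); split; first exact: unit_cols_row.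
by rewrite wyQ_peel hQ.
Qed.

End CompactWY.

Theorem theorem3 (R : realType) (M K : nat) (hM : (0 < M)%N) (hK : (0 < K)%N) :
  (forall V : 'M[R]_(M + K, M), (forall j : 'I_M, col j V != 0) ->
     Smat (normcols V) \in unitmx /\ stiefel (gammaNM V)) /\
  (forall Om : 'M[R]_(M + K, M), stiefel Om ->
     exists V : 'M[R]_(M + K, M), (forall j : 'I_M, col j V != 0) /\ gammaNM V = Om).
Proof.
split.
  move=> V hV; split; first exact: Smat_unit.
  rewrite gamma_wyQ; apply: stiefel_orthogonal_cols.
  exact/wyQ_orthogonal/normcols_unit_cols.
move=> Om hO; have [U [hU hQ]] := wyQ_surjective hK hO.
exists U; split; first exact: unit_cols_neq0.
by rewrite gamma_wyQ normcols_id.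
Qed.
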